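(* Let $b\ge2$ be an integer, $\gamma\in(0,1)$, and let $\phi$ be a $\mathbb{Z}$-periodic Lipschitz function satisfying condition (H). Then the family $\{m_x\}_{x\in[0,1]}$ is jointly uniformly continuous across scales: for every $\varepsilon>0$ there exists $\delta>0$ such that for every $x\in[0,1]$, every $y\in\mathbb{R}$ and every $r\in(0,1)$, $$m_x(B(y,\delta r))\le\varepsilon\, m_x(B(y,r)).$$
   Context: $\Lambda=\{0,\dots,b-1\}$, $\Sigma=\Lambda^{\mathbb{Z}_+}$, $\nu$ uniform on $\Lambda$. $S(x,\mathbf{j})=\sum_{n\ge1}\gamma^{n-1}\phi\big(\frac{x+j_1+j_2b+\cdots+j_nb^{n-1}}{b^n}\big)$ for $\mathbf{j}\in\Sigma$, $x\in[0,1]$. Condition (H): for all $\mathbf{i}\neq\mathbf{j}\in\Sigma$, $x\mapsto S(x,\mathbf{j})-S(x,\mathbf{i})$ is not identically zero on $[0,1]$. $m_x$ is the image of $\nu^{\mathbb{Z}_+}$ under $\mathbf{j}\mapsto S(x,\mathbf{j})$. *)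

From HB Require Import structures.
From mathcomp Require Import all_boot all_order all_algebra.
From mathcomp Require Import all_classical all_reals all_analysis.
Unset Printing Implicit Defensive.
Import Order.TTheory GRing.Theory Num.Theory numFieldNormedType.Exports.
Local Open Scope classical_set_scope.
Local Open Scope ring_scope.

(* For b >= 1 (in particular b >= 2)
   the type 'I_(b.-1).+1 is exactly 'I_b, i.e. {0,...,b-1}; writing it this
   way makes it syntactically inhabited (needed for the pointed structure). *)
Definition Lam (b : nat) : Type := 'I_(b.-1).+1.
HB.instance Definition _ (b : nat) := Finite.on (Lam b).
HB.instance Definition _ (b : nat) := isPointed.Build (Lam b) ord0.

(* Sigma = Lambda^{Z_+}: a sequence j = (j_1, j_2, ...) is stored as
   j : nat -> Lam b with j_n = j (n-1). *)
Definition Sig (b : nat) := nat -> Lam b.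


Definition cylinder (b n : nat) (w : 'I_n -> Lam b) : set (Sig b) :=
  [set j | forall k : 'I_n, j k = w k].

Definition cylinders (b : nat) : set (set (Sig b)) :=
  [set C | exists n (w : 'I_n -> Lam b), C = @cylinder b n w].

Notation SigM b := (g_sigma_algebraType (cylinders b)).

(* P is the Bernoulli product measure nu^{Z_+}, nu uniform on Lambda:
   every cylinder of length n has mass b^{-n}.  (This determines P uniquely
   on the product sigma-algebra, by the pi-lambda theorem.) *)
Definition is_uniform_product (R : realType) (b : nat)
    (P : probability (SigM b) R) : Prop :=
  forall n (w : 'I_n -> Lam b),
    P (@cylinder b n w) = ((b%:R : R) ^- n)%:E.

(* S(x, j) = sum_{n >= 1} gamma^{n-1} phi((x + j_1 + j_2 b + ... + j_n b^{n-1}) / b^n),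
   reindexed with n = m+1, m >= 0; the series is the limit of its partial
   sums (it converges absolutely since phi is bounded and 0<gamma<1). *)
Definition Sfun (R : realType) (b : nat) (gamma : R) (phi : R -> R)
    (x : R) (j : Sig b) : R :=
  limn (fun N : nat => \sum_(0 <= m < N)
    (gamma ^+ m * phi ((x + \sum_(k < m.+1) ((j k : nat)%:R * (b%:R) ^+ k))
                       / (b%:R) ^+ m.+1))).

Definition Zperiodic (R : realType) (phi : R -> R) : Prop :=
  forall t : R, phi (t + 1) = phi t.

Definition is_lipschitz (R : realType) (phi : R -> R) : Prop :=
  exists L : R, forall s t : R, `|phi s - phi t| <= L * `|s - t|.

Definition condH (R : realType) (b : nat) (gamma : R) (phi : R -> R) : Prop :=
  forall i j : Sig b, i <> j ->
    ~ (forall x : R, 0 <= x <= 1 ->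
         Sfun R b gamma phi x j - Sfun R b gamma phi x i = 0).

Definition mx (R : realType) (b : nat) (gamma : R) (phi : R -> R)
    (P : probability (SigM b) R) (x : R) (A : set R) : \bar R :=
  P ((Sfun R b gamma phi x : SigM b -> R) @^-1` A).

(* If j and j' share their first n digits, then
   |S j - S j'| <= 2 C gamma^n, and prepending a word u rescales differences:
   S(x, u i) - S(x, u j) = gamma^|u| (S(x_u, i) - S(x_u, j)), where x_u is the image of x
   under the inverse branches t |-> (t + a)/b along u.  Condition (H) separates two digit
   sequences i, j by some d > 0 at some x0; as S is Lipschitz in x and the points x_u with
   |u| = K are b^-K-dense, every x has a word w of length K after which i and j are still
   separated by d/2.  So, for rho small compared with gamma^(s+K) d, every s-cylinder
   meeting the preimage of B(y, rho) contains an (s+K+N)-cylinder missing it, where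
   C gamma^N is small compared with d (continue by w, then by i or by j): the union of the cylinders meeting the preimage loses the
   proportion b^-(K+N) of its mass each time the depth grows by K+N.  Starting at the depth
   n with gamma^n ~ r and iterating m times gives
   m_x(B(y, delta r)) <= (1 - b^-(K+N))^m m_x(B(y, r)). *)

From HB Require Import structures.
From mathcomp Require Import all_boot all_order all_algebra.
From mathcomp Require Import all_classical all_reals all_analysis.
From mathcomp Require Import ring lra.
Import Order.TTheory GRing.Theory Num.Theory numFieldNormedType.Exports.
Local Open Scope classical_set_scope.
Local Open Scope ring_scope.

Section geometric_bounds.
Context {R : realType}.
Implicit Types (q g c e M a : R) (u v : R ^nat).

Lemma exists_mul_expr_le c e q : 0 <= q < 1 -> 0 < e -> exists n, c * q ^+ n <= e.
Proof.
move=> /andP[q0 q1] e0; have c1 : 0 < `|c| + 1 by rewrite ltr_pwDr.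
have q1' : `|q| < 1 by rewrite ger0_norm.
have [n _ /(_ n (leqnn n))] := cvgr_lt _ (cvg_expr q1') _ (divr_gt0 e0 c1).
rewrite ltr_pdivlMr // mulrC => lt_qn; exists n; apply: le_trans (ltW lt_qn).
by apply: ler_wpM2r; [exact: exprn_ge0 | rewrite (le_trans (ler_norm c)) ?lerDl].
Qed.

Lemma exists_expr_bracket q a : 0 < q < 1 -> 0 < a <= 1 ->
  exists n, q * a < q ^+ n <= a.
Proof.
move=> /andP[q0 q1] /andP[a0 a1].
have ex : exists n, q ^+ n <= a.
  have [|n] := @exists_mul_expr_le 1 a q _ a0; first by rewrite ltW.
  by rewrite mul1r; exists n.
case: (ex_minnP ex) => n qna qn_min; exists n; rewrite qna andbT.
case: n qna qn_min => [|n] _ qn_min; first by rewrite expr0; nra.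
have : a < q ^+ n by rewrite ltNge; apply/negP => /qn_min; rewrite ltnn.
by rewrite exprS ltr_pM2l.
Qed.

Lemma sum_expr_tail_le g (N n : nat) : 0 <= g < 1 ->
  \sum_(N <= k < n) g ^+ k <= g ^+ N / (1 - g).
Proof.
move=> /andP[g0 g1]; have g1' : 0 < 1 - g by rewrite subr_gt0.
have gN0 : 0 <= g ^+ N / (1 - g) by rewrite divr_ge0 ?exprn_ge0 // ltW.
have [nN|Nn] := leqP n N; first by rewrite big_geq.
rewrite -(subnKC (ltnW Nn)) geometric_partial_tail geometric_seriesE ?lt_eqF //=.
rewrite ler_pM2r ?invr_gt0 // ler_piMr ?exprn_ge0 // lerBlDr lerDl exprn_ge0 //.
Qed.

Lemma is_cvg_series_expr_dominated u M g : 0 <= g < 1 ->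
  (forall m, `|u m| <= M * g ^+ m) -> cvgn (series u).
Proof.
move=> /andP[g0 g1] u_le; apply: normed_cvg.
have M0 : 0 <= M by have := u_le 0%N; rewrite expr0 mulr1; apply: le_trans.
apply: (series_le_cvg (v_ := geometric M g)) => //=.
- by move=> m; apply: geometric_ge0.
- by apply: is_cvg_geometric_series; rewrite ger0_norm.
Qed.

Lemma series_tail_le u M g : 0 <= g < 1 ->
  (forall m, `|u m| <= M * g ^+ m) ->
  forall N, `|limn (series u) - series u N| <= M * (g ^+ N / (1 - g)).
Proof.
move=> g01 u_le N.
have M0 : 0 <= M by have := u_le 0%N; rewrite expr0 mulr1; apply: le_trans.
have cu : cvgn (series u) by apply: is_cvg_series_expr_dominated g01 u_le.
have partial_le n : (N <= n)%N -> `|series u n - series u N| <= M * (g ^+ N / (1 - g)).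
  move=> Nn; rewrite sub_series Nn; apply: le_trans (ler_norm_sum _ _ _) _.
  apply: le_trans (ler_sum _ (fun m _ => u_le m)) _.
  by rewrite -mulr_sumr ler_wpM2l // sum_expr_tail_le.
have near_N : \forall n \near \oo, `|series u n - series u N| <= M * (g ^+ N / (1 - g)).
  by near=> n; apply: partial_le; near: n; exact: nbhs_infty_ge.
rewrite ler_norml; apply/andP; split.
- rewrite lerBrDr; apply: limr_ge => //.
  by apply: filterS near_N => n; rewrite ler_norml => /andP[? ?]; lra.
- rewrite lerBlDr; apply: limr_le => //.
  by apply: filterS near_N => n; rewrite ler_norml => /andP[? ?]; lra.
Unshelve. all: by end_near.
Qed.

Lemma lim_dist_le u v e : cvgn u -> cvgn v ->
  (forall n, `|u n - v n| <= e) -> `|limn u - limn v| <= e.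
Proof.
move=> cu cv uv_le; rewrite -limB // -lim_norm; last exact: is_cvgB.
by apply: limr_le; [apply: is_cvg_norm; exact: is_cvgB | exact: nearW].
Qed.
End geometric_bounds.

Definition eq_prefix {b : nat} (n : nat) (j j' : Sig b) : Prop :=
  forall k, (k < n)%N -> j k = j' k.

Definition scons {b : nat} (a : Lam b) (j : Sig b) : Sig b :=
  fun k => if k is k'.+1 then j k' else a.

Definition prepend {b : nat} (w : seq (Lam b)) (j : Sig b) : Sig b :=
  foldr scons j w.

Lemma digit_lt (b : nat) (a : Lam b) : (0 < b)%N -> (a < b)%N.
Proof. by move=> b0; have := ltn_ord a; move: (nat_of_ord a); rewrite prednK. Qed.

Definition digit_value {R : realType} {b : nat} (n : nat) (j : Sig b) : R :=
  \sum_(k < n) (j k : nat)%:R * (b%:R : R) ^+ k.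

Definition S_term {R : realType} {b : nat} (gamma : R) (phi : R -> R)
    (x : R) (j : Sig b) (m : nat) : R :=
  gamma ^+ m * phi ((x + digit_value m.+1 j) / (b%:R : R) ^+ m.+1).

Definition S_tail_const {R : realType} (gamma : R) (phi : R -> R) (L : R) : R :=
  (`|phi 0| + L) / (1 - gamma).

Definition branch {R : realType} {b : nat} (x : R) (w : seq (Lam b)) : R :=
  foldl (fun t (a : Lam b) => (t + (a : nat)%:R) / b%:R) x w.

Section weierstrass_type_series.
Context {R : realType} {b : nat} {gamma : R} {phi : R -> R} {L : R}.
Hypothesis b_gt0 : (0 < b)%N.
Hypothesis gamma01 : 0 < gamma < 1.
Hypothesis phi_lip : forall s t, `|phi s - phi t| <= L * `|s - t|.

Local Notation S := (Sfun R b gamma phi).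
Local Notation bR := (b%:R : R).
Local Notation term := (S_term gamma phi).
Local Notation C := (S_tail_const gamma phi L).
Implicit Types (x t : R) (i j : Sig b) (a : Lam b) (w : seq (Lam b)).

Let gamma_ge0 : 0 <= gamma. Proof. by case/andP: gamma01 => /ltW. Qed.
Let gamma_lt1 : gamma < 1. Proof. by case/andP: gamma01. Qed.
Let gamma01w : 0 <= gamma < 1. Proof. by rewrite gamma_ge0 gamma_lt1. Qed.
Let bR_gt0 : 0 < bR. Proof. by rewrite ltr0n. Qed.

Lemma lipschitz_const_ge0 : 0 <= L.
Proof.
by have := phi_lip 1 0; rewrite subr0 normr1 mulr1; apply: le_trans.
Qed.

Lemma S_tail_const_ge0 : 0 <= C.
Proof.
by apply: divr_ge0; rewrite ?subr_ge0 ?(ltW gamma_lt1) // addr_ge0 ?lipschitz_const_ge0.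
Qed.

Lemma SfunE x j : S x j = limn (series (term x j)).
Proof. by []. Qed.

Lemma digit_value_bounds n j : 0 <= (digit_value n j : R) <= bR ^+ n - 1.
Proof.
elim: n => [|n /andP[ge0 le]]; first by rewrite /digit_value big_ord0 expr0 subrr lexx.
rewrite /digit_value big_ord_recr /= -/(digit_value n j : R) exprS.
have jn_le : (j n : nat)%:R <= bR - 1.
  by rewrite lerBrDr natr1 ler_nat digit_lt.
have bn0 : 0 <= bR ^+ n by rewrite exprn_ge0 // ltW.
have := ler_wpM2r bn0 jn_le; rewrite mulrBl mul1r.
by rewrite addr_ge0 ?mulr_ge0 //=; lra.
Qed.

Lemma digit_point_in01 x n j : 0 <= x <= 1 ->
  0 <= (x + digit_value n j) / bR ^+ n <= 1.
Proof.
move=> /andP[x0 x1]; have /andP[d0 d1] := digit_value_bounds n j.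
have bn : 0 < bR ^+ n by rewrite exprn_gt0.
by rewrite divr_ge0 ?addr_ge0 ?(ltW bn) //= ler_pdivrMr // mul1r; lra.
Qed.

Lemma phi_bound_01 t : 0 <= t <= 1 -> `|phi t| <= `|phi 0| + L.
Proof.
move=> /andP[t0 t1]; have := phi_lip t 0; rewrite subr0 [`|t|]ger0_norm //.
have := ler_wpM2l lipschitz_const_ge0 t1; rewrite mulr1.
have := ler_normD (phi 0) (phi t - phi 0); rewrite addrC subrK; lra.
Qed.

Lemma S_term_bound x j m : 0 <= x <= 1 ->
  `|term x j m| <= (`|phi 0| + L) * gamma ^+ m.
Proof.
move=> x01; rewrite normrM ger0_norm ?exprn_ge0 // mulrC ler_wpM2r ?exprn_ge0 //.
exact/phi_bound_01/digit_point_in01.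
Qed.

Lemma is_cvg_S_series x j : 0 <= x <= 1 -> cvgn (series (term x j)).
Proof.
by move=> x01; apply: (is_cvg_series_expr_dominated _ _ _ gamma01w) => m; apply: S_term_bound.
Qed.

Lemma Sfun_tail x j N : 0 <= x <= 1 ->
  `|S x j - series (term x j) N| <= C * gamma ^+ N.
Proof.
move=> x01; rewrite /S_tail_const mulrAC -mulrA.
by apply: (series_tail_le _ _ _ gamma01w) => m; apply: S_term_bound.
Qed.

Lemma Sfun_eq_prefix x j j' n : 0 <= x <= 1 -> eq_prefix n j j' ->
  `|S x j - S x j'| <= 2 * C * gamma ^+ n.
Proof.
move=> x01 jj'.
have same : series (term x j) n = series (term x j') n.
  rewrite /series /= !big_nat; apply: eq_bigr => m /andP[_ mn].
  congr (_ * phi ((_ + _) / _)); apply: eq_bigr => k _.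
  by rewrite jj' // (leq_trans (ltn_ord k)).
have := Sfun_tail x j n x01; have := Sfun_tail x j' n x01; rewrite same.
set s := series _ n => tail_j' tail_j.
rewrite (_ : S x j - S x j' = (S x j - s) - (S x j' - s)); last by ring.
by apply: le_trans (ler_normB _ _) _; lra.
Qed.

Lemma Sfun_lipschitz x x' j : 0 <= x <= 1 -> 0 <= x' <= 1 ->
  `|S x j - S x' j| <= L * `|x - x'| / (1 - gamma).
Proof.
move=> x01 x'01; rewrite !SfunE; apply: lim_dist_le; try exact: is_cvg_S_series.
move=> N; rewrite /series /= -sumrB; apply: le_trans (ler_norm_sum _ _ _) _.
have term_le m : `|term x j m - term x' j m| <= L * `|x - x'| * gamma ^+ m.
  rewrite /S_term -mulrBr normrM ger0_norm ?exprn_ge0 // mulrC ler_wpM2r ?exprn_ge0 //.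
  apply: le_trans (phi_lip _ _) _; rewrite ler_wpM2l ?lipschitz_const_ge0 //.
  rewrite -mulrBl opprD addrACA subrr addr0 normrM.
  rewrite [`|_^-1|]ger0_norm ?invr_ge0 ?exprn_ge0 ?ler0n //.
  by rewrite ler_piMr // invf_le1 ?exprn_gt0 // exprn_ege1 // ler1n.
apply: le_trans (ler_sum _ (fun m _ => term_le m)) _.
rewrite -mulr_sumr ler_wpM2l ?mulr_ge0 ?lipschitz_const_ge0 //.
by have := sum_expr_tail_le gamma 0 N gamma01w; rewrite expr0 mul1r.
Qed.

Lemma digit_value_scons n (a : Lam b) j :
  digit_value n.+1 (scons a j) = (a : nat)%:R + bR * digit_value n j.
Proof.
rewrite /digit_value big_ord_recl /= expr0 mulr1 mulr_sumr; congr (_ + _).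
by apply: eq_bigr => k _; rewrite exprS; ring.
Qed.

Lemma digit_step_in01 x (a : Lam b) : 0 <= x <= 1 -> 0 <= (x + (a : nat)%:R) / bR <= 1.
Proof.
move=> x01; have := digit_point_in01 x 1 (fun=> a) x01.
by rewrite /digit_value big_ord1 expr0 mulr1 expr1.
Qed.

Lemma Sfun_scons x (a : Lam b) j : 0 <= x <= 1 -> let x' := (x + (a : nat)%:R) / bR in
  S x (scons a j) = phi x' + gamma * S x' j.
Proof.
move=> x01 x'; have x'01 : 0 <= x' <= 1 by exact: digit_step_in01.
have shifted : (fun n => series (term x (scons a j)) n.+1) =
               (fun n => phi x' + gamma * series (term x' j) n).
  apply/funext => n; rewrite /series /= big_nat_recl // mulr_sumr; congr (_ + _).
    by rewrite /S_term expr0 mul1r digit_value_scons /digit_value big_ord0 mulr0 addr0 expr1.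
  apply: eq_bigr => m _; rewrite /S_term exprS -mulrA digit_value_scons.
  congr (_ * (_ * phi _)); rewrite [in LHS]exprS /x'.
  by field; rewrite expf_neq0 ?andbT gt_eqF.
rewrite SfunE; apply: cvg_lim => //; rewrite -cvg_shiftS /= shifted.
by apply: cvgD; [exact: cvg_cst | apply: cvgMl_tmp; exact: is_cvg_S_series].
Qed.

Lemma branch_in01 x w : 0 <= x <= 1 -> 0 <= branch x w <= 1.
Proof. by elim: w x => [|a w IHw] x x01 //=; apply/IHw/digit_step_in01. Qed.

Lemma branch_cat x u w : branch x (u ++ w) = branch (branch x u) w.
Proof. exact: foldl_cat. Qed.

Lemma Sfun_prepend_sub x w i j : 0 <= x <= 1 ->
  S x (prepend w i) - S x (prepend w j) =
  gamma ^+ size w * (S (branch x w) i - S (branch x w) j).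
Proof.
elim: w x => [|a w IHw] x x01 /=; first by rewrite expr0 mul1r.
rewrite !Sfun_scons // exprS -mulrA -IHw; last exact: digit_step_in01.
by ring.
Qed.

Lemma exists_digit_floor s : 0 <= s <= bR ->
  exists a : Lam b, (a : nat)%:R <= s <= (a : nat)%:R + 1.
Proof.
move=> /andP[s0 sb]; have /andP[tr_le tr_gt] := truncn_itv s0.
have [lt_b|ge_b] := ltnP (Num.truncn s) b.
  have lt_b' : (Num.truncn s < b.-1.+1)%N by rewrite prednK.
  by exists (Ordinal lt_b'); rewrite /= tr_le natr1 ltW.
have last_lt : (b.-1 < b.-1.+1)%N by [].
exists (Ordinal last_lt); rewrite /= natr1 prednK //.
have b_le_s : bR <= s by rewrite -truncn_ge_nat.
by rewrite sb andbT (le_trans _ b_le_s) // ler_nat leq_pred.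
Qed.

Lemma branch_dense x K t : 0 <= x <= 1 -> 0 <= t <= 1 ->
  exists2 w : seq (Lam b), size w = K & `|branch x w - t| <= (bR ^+ K)^-1.
Proof.
move=> x01; elim: K t => [|K IHK] t t01.
  exists [::] => //=; rewrite expr0 invr1 ler_norml.
  by case/andP: x01 => ? ?; case/andP: t01 => ? ?; apply/andP; split; lra.
have [a /andP[a_le le_a1]] : exists a : Lam b, (a : nat)%:R <= t * bR <= (a : nat)%:R + 1.
  apply: exists_digit_floor; case/andP: t01 => t0 t1.
  by rewrite mulr_ge0 ?(ltW bR_gt0) //= ler_piMl // ltW.
have [|w sw close] := IHK (t * bR - (a : nat)%:R); first by apply/andP; split; lra.
exists (rcons w a); first by rewrite size_rcons sw.
rewrite /branch foldl_rcons -/(branch x w).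
rewrite (_ : _ - t = (branch x w - (t * bR - (a : nat)%:R)) / bR); last first.
  by field; rewrite gt_eqF.
rewrite normrM [`|_^-1|]ger0_norm ?invr_ge0 ?ler0n // exprSr invfM.
by rewrite ler_wpM2r // invr_ge0 ler0n.
Qed.

Lemma separated_near_point x0 i j K : 0 <= x0 <= 1 ->
  L / (1 - gamma) * (bR ^+ K)^-1 <= `|S x0 i - S x0 j| / 4 ->
  forall x, 0 <= x <= 1 -> exists2 w : seq (Lam b), size w = K &
    `|S x0 i - S x0 j| / 2 <= `|S (branch x w) i - S (branch x w) j|.
Proof.
move=> x0_01 small x x01; have [w sw close] := branch_dense x K x0 x01 x0_01.
exists w => //; have xw01 := branch_in01 x w x01.
have drift k : `|S (branch x w) k - S x0 k| <= `|S x0 i - S x0 j| / 4.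
  apply: le_trans (Sfun_lipschitz _ _ k xw01 x0_01) (le_trans _ small).
  by rewrite mulrAC ler_wpM2l ?divr_ge0 ?lipschitz_const_ge0 // subr_ge0 ltW.
have := drift i; have := drift j.
have := ler_normD (S (branch x w) i - S (branch x w) j) (S (branch x w) j - S x0 j).
have := ler_normD (S x0 i - S (branch x w) i) (S (branch x w) i - S x0 j).
rewrite [`|S x0 i - S (branch x w) i|]distrC !addrA !subrK; lra.
Qed.

Lemma exists_separated_pair : (1 < b)%N -> condH R b gamma phi ->
  exists i j : Sig b, exists2 x0, 0 <= x0 <= 1 & 0 < `|S x0 i - S x0 j|.
Proof.
move=> b_gt1 H; pose i : Sig b := fun=> ord0; pose j : Sig b := fun=> ord_max.
have ij : i <> j.
  move=> /(congr1 (fun k : Sig b => nat_of_ord (k 0%N))) /= /eqP.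
  by rewrite eq_sym -(subnKC b_gt1).
apply: contrapT => none; apply: (H i j ij) => x x01.
have [//|ne] := eqVneq (S x j - S x i) 0.
by exfalso; apply: none; exists j, i; exists x; rewrite ?normr_gt0.
Qed.
End weierstrass_type_series.

Definition prefix_closed {b : nat} (n : nat) (A : set (Sig b)) : Prop :=
  forall j j', eq_prefix n j j' -> A j -> A j'.

Lemma prepend_cat (b : nat) (u v : seq (Lam b)) i :
  prepend (u ++ v) i = prepend u (prepend v i).
Proof. exact: foldr_cat. Qed.

Lemma prepend_iota (b : nat) (j0 i : Sig b) m s k : (k < s)%N ->
  prepend (map j0 (iota m s)) i k = j0 (m + k)%N.
Proof.
elim: s m k => [|s IHs] m [|k] //= ks; first by rewrite addn0.
by rewrite IHs // addSnnS.
Qed.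

Lemma eq_prefix_prepend (b : nat) (j0 i : Sig b) s w :
  eq_prefix s j0 (prepend (map j0 (iota 0 s) ++ w) i).
Proof. by move=> k ks; rewrite prepend_cat prepend_iota. Qed.

Section cylinders.
Context {b : nat}.

Lemma measurable_cylinder n (w : 'I_n -> Lam b) :
  measurable (cylinder b n w : set (SigM b)).
Proof. by apply: sub_sigma_algebra; exists n, w. Qed.

Lemma eq_prefix_cylinder n (j0 : Sig b) :
  eq_prefix n j0 = cylinder b n (fun k : 'I_n => j0 k).
Proof.
apply/seteqP; split => j /= h; first by move=> k; rewrite h.
by move=> k kn; rewrite (h (Ordinal kn)).
Qed.

Lemma measurable_prefix_closed n (A : set (Sig b)) :
  prefix_closed n A -> measurable (A : set (SigM b)).
Proof.
move=> A_closed.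
have -> : A = \bigcup_(w in [set w : {ffun 'I_n -> Lam b} |
                 exists2 j, A j & forall k : 'I_n, j k = w k]) cylinder b n w.
  apply/seteqP; split => j.
    move=> Aj; exists [ffun k : 'I_n => j k]; first by exists j => // k; rewrite ffunE.
    by move=> k; rewrite ffunE.
  move=> [w [j' Aj' j'w] jw]; apply: A_closed Aj' => k kn.
  by rewrite (j'w (Ordinal kn)) (jw (Ordinal kn)).
apply: fin_bigcup_measurable; first exact: finite_finset.
by move=> w _; apply: measurable_cylinder.
Qed.

Definition ffun_pad {n} (w : {ffun 'I_n -> Lam b}) : Sig b :=
  fun k => if insub k is Some k' then w k' else ord0.

Lemma cylinder_ffun_pad n (w : {ffun 'I_n -> Lam b}) :
  cylinder b n w = eq_prefix n (ffun_pad w).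
Proof.
by rewrite eq_prefix_cylinder; congr (cylinder b n _); apply/funext => k; rewrite /ffun_pad valK.
Qed.

Variables (R : realType) (P : probability (SigM b) R).

Lemma measure_cylinder_partition n (A : set (SigM b)) : measurable A ->
  P A = (\sum_(w \in [set: {ffun 'I_n -> Lam b}]) P (A `&` cylinder b n w))%E.
Proof.
move=> mA; rewrite -measure_fin_bigcup.
- congr (P _); apply/seteqP; split => j; last by case=> w _ [].
  by move=> Aj; exists [ffun k : 'I_n => j k] => //; split => // k; rewrite ffunE.
- exact: finite_finset.
- move=> w w' _ _ [j [[_ jw] [_ jw']]]; apply/ffunP => k.
  by rewrite -jw -jw'.
- by move=> w _; apply: measurableI => //; apply: measurable_cylinder.
Qed.

Lemma measure_eq_prefix n (j0 : Sig b) : is_uniform_product R b P ->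
  P (eq_prefix n j0) = (((b%:R : R) ^+ n)^-1)%:E.
Proof. by move=> P_unif; rewrite eq_prefix_cylinder P_unif. Qed.

End cylinders.

Section ball_hulls.
Context {R : realType} {b : nat} {gamma : R} {phi : R -> R} {L : R}.
Variable P : probability (SigM b) R.
Hypothesis b_gt0 : (0 < b)%N.
Hypothesis gamma01 : 0 < gamma < 1.
Hypothesis phi_lip : forall s t, `|phi s - phi t| <= L * `|s - t|.
Hypothesis P_unif : is_uniform_product R b P.

Local Notation S := (Sfun R b gamma phi).
Local Notation C := (S_tail_const gamma phi L).
Local Notation bR := (b%:R : R).

Let gamma_ge0 : 0 <= gamma. Proof. by case/andP: gamma01 => /ltW. Qed.
Let gamma01w : 0 <= gamma < 1. Proof. by rewrite gamma_ge0; case/andP: gamma01. Qed.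
Let S_eq_prefix := Sfun_eq_prefix b_gt0 gamma01 phi_lip.

Definition ball_hull (x y rho : R) (n : nat) : set (Sig b) :=
  [set j0 | exists2 j, eq_prefix n j0 j & ball y rho (S x j)].

Lemma ball_hull_prefix_closed x y rho n : prefix_closed n (ball_hull x y rho n).
Proof.
move=> j j' jj' [j'' jj'' yj'']; exists j'' => // k kn.
by rewrite -jj' // jj''.
Qed.

Lemma measurable_ball_hull x y rho n : measurable (ball_hull x y rho n : set (SigM b)).
Proof. exact: measurable_prefix_closed (ball_hull_prefix_closed x y rho n). Qed.

Lemma ball_hull_le n m x y rho : (n <= m)%N -> ball_hull x y rho m `<=` ball_hull x y rho n.
Proof. by move=> nm j0 [j j0j yj]; exists j => // k kn; apply: j0j; apply: leq_trans nm. Qed.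

Lemma preimage_ball_sub_hull x y rho n :
  (S x : SigM b -> R) @^-1` ball y rho `<=` ball_hull x y rho n.
Proof. by move=> j0 yj0; exists j0. Qed.

Lemma ball_hull_sub_preimage x y rho n : 0 <= x <= 1 ->
  ball_hull x y rho n `<=` (S x : SigM b -> R) @^-1` ball y (rho + 2 * C * gamma ^+ n).
Proof.
move=> x01 j0 [j j0j]; rewrite -!ball_normE /= => yj.
have := S_eq_prefix _ _ _ _ x01 j0j; rewrite distrC => j0j_close.
by apply: le_lt_trans (ler_distD (S x j) _ _) _; rewrite ltr_leD.
Qed.

Lemma measurable_preimage_ball x y rho : 0 <= x <= 1 ->
  measurable ((S x : SigM b -> R) @^-1` ball y rho).
Proof.
move=> x01.
have -> : (S x : SigM b -> R) @^-1` ball y rho =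
    \bigcup_n [set j0 | eq_prefix n j0 `<=` (S x : SigM b -> R) @^-1` ball y rho].
  apply/seteqP; split => [j0 yj0|j0 [n _ /(_ j0 (fun _ _ => erefl))] //].
  move: yj0; rewrite -ball_normE /= -subr_gt0 => gap.
  have [n small] : exists n, 2 * C * gamma ^+ n <= (rho - `|y - S x j0|) / 2.
    by apply: exists_mul_expr_le; rewrite ?divr_gt0.
  exists n => // j' j0j'; rewrite /preimage /=.
  apply: le_lt_trans (ler_distD (S x j0) _ _) _.
  have := S_eq_prefix _ _ _ _ x01 j0j'; lra.
apply: bigcupT_measurable => n; apply: (@measurable_prefix_closed _ n).
move=> j j' jj' sub j'' j'j''; apply: sub => k kn.
by rewrite jj' // j'j''.
Qed.

Section contraction.
Variables (i j : Sig b) (d : R) (K N : nat).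
Hypothesis d_gt0 : 0 < d.
Hypothesis separated : forall x, 0 <= x <= 1 ->
  exists2 w : seq (Lam b), size w = K & d / 2 <= `|S (branch x w) i - S (branch x w) j|.
Hypothesis tail_small : C * gamma ^+ N <= d / 16.

Local Notation contraction := (1 - (bR ^+ (K + N))^-1).

Let d_ge0 : 0 <= d. Proof. exact: ltW. Qed.

Lemma ball_hull_escape s x y rho (j0 : Sig b) : 0 <= x <= 1 ->
  rho <= gamma ^+ (s + K) * d / 8 ->
  exists2 j1, eq_prefix s j0 j1 & ~ ball_hull x y rho (s + K + N) j1.
Proof.
(* The continuations of the first s digits of j0 by w and then by i or by j have
   values of S x at distance >= gamma^(s+K) d/2, so they cannot both be in the hull. *)
move=> x01 rho_le; pose u := map j0 (iota 0 s).
have [w sw sep] := separated _ (branch_in01 b_gt0 _ u x01).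
pose ja := prepend (u ++ w) i; pose jb := prepend (u ++ w) j.
have far : gamma ^+ (s + K) * d / 2 <= `|S x ja - S x jb|.
  rewrite (Sfun_prepend_sub b_gt0 gamma01 phi_lip) // branch_cat size_cat size_map size_iota sw.
  by rewrite normrM ger0_norm ?exprn_ge0 // -mulrA ler_wpM2l ?exprn_ge0.
have tail : 2 * C * gamma ^+ (s + K + N) <= gamma ^+ (s + K) * d / 8.
  have -> : 2 * C * gamma ^+ (s + K + N) = 2 * gamma ^+ (s + K) * (C * gamma ^+ N).
    by rewrite exprD; ring.
  apply: le_trans (ler_wpM2l _ tail_small) _; first by rewrite mulr_ge0 ?exprn_ge0.
  suff -> : 2 * gamma ^+ (s + K) * (d / 16) = gamma ^+ (s + K) * d / 8 by [].
  by field.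
have near_y j' : ball_hull x y rho (s + K + N) j' -> `|y - S x j'| < rho + 2 * C * gamma ^+ (s + K + N).
  by move=> /(ball_hull_sub_preimage _ _ _ _ x01); rewrite /preimage /=.
have [ha|] := pselect (ball_hull x y rho (s + K + N) ja); last first.
  by exists ja => //; exact: eq_prefix_prepend.
have [hb|] := pselect (ball_hull x y rho (s + K + N) jb); last first.
  by exists jb => //; exact: eq_prefix_prepend.
exfalso; have := near_y _ ha; have := near_y _ hb.
by have := ler_distD y (S x ja) (S x jb); rewrite [`|S x ja - y|]distrC; lra.
Qed.

Lemma contraction_ge0 : 0 <= contraction.
Proof. by rewrite subr_ge0 invf_le1 ?exprn_gt0 ?ltr0n // exprn_ege1 // ler1n. Qed.

Lemma ball_hull_cylinder_contract s x y rho (j0 : Sig b) : 0 <= x <= 1 ->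
  rho <= gamma ^+ (s + K) * d / 8 ->
  (P (ball_hull x y rho (s + K + N) `&` eq_prefix s j0) <=
   contraction%:E * P (ball_hull x y rho s `&` eq_prefix s j0))%E.
Proof.
move=> x01 rho_le; set cyl := eq_prefix s j0.
have mcyl n j' : measurable (eq_prefix n j' : set (SigM b)).
  by rewrite eq_prefix_cylinder; apply: measurable_cylinder.
have [[j' [hull_j' cyl_j']]|miss] :=
    pselect (exists j', ball_hull x y rho s j' /\ cyl j'); last first.
  have -> : ball_hull x y rho s `&` cyl = set0.
    by apply/seteqP; split => // j' [? ?]; apply: miss; exists j'.
  suff -> : ball_hull x y rho (s + K + N) `&` cyl = set0 by rewrite measure0 mule0.
  apply/seteqP; split => // j'' [hull_j'' ?]; apply: miss; exists j''; split => //.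
  by apply: ball_hull_le hull_j''; rewrite -addnA leq_addr.
have -> : ball_hull x y rho s `&` cyl = cyl.
  apply/seteqP; split => [? []//|j'' cyl_j'']; split => //.
  apply: (ball_hull_prefix_closed x y rho s j') hull_j' => k ks.
  by rewrite -cyl_j' ?cyl_j''.
have [j1 cyl_j1 out_j1] := ball_hull_escape s x y rho j0 x01 rho_le.
have sub_j1 : eq_prefix (s + K + N) j1 `<=` cyl.
  move=> j'' j1j'' k ks; rewrite cyl_j1 // j1j'' //.
  by apply: leq_trans ks _; rewrite -addnA leq_addr.
apply: (@le_trans _ _ (P (cyl `\` eq_prefix (s + K + N) j1))).
  apply: le_measure; rewrite ?inE.
  - by apply: measurableI; [exact: measurable_ball_hull | exact: mcyl].
  - by apply: measurableD; exact: mcyl.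
  move=> j'' [hull_j'' cyl_j'']; split => // j1j''; apply: out_j1.
  by apply: (ball_hull_prefix_closed x y rho _ j'') hull_j'' => k kn; rewrite j1j''.
have PD : P (cyl `\` eq_prefix (s + K + N) j1) =
          (P cyl - P (eq_prefix (s + K + N) j1))%E.
  rewrite measureD //; first by congr (_ - P _)%E; exact: setIidr.
  - exact: mcyl.
  - by apply: le_lt_trans (probability_le1 _ (mcyl _ _)) _; rewrite ltry.
rewrite PD !measure_eq_prefix // -EFinB -EFinM lee_fin -addnA exprD invfM.
by rewrite mulrBl mul1r mulrC.
Qed.

Lemma ball_hull_contract s x y rho : 0 <= x <= 1 ->
  rho <= gamma ^+ (s + K) * d / 8 ->
  (P (ball_hull x y rho (s + K + N)) <= contraction%:E * P (ball_hull x y rho s))%E.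
Proof.
move=> x01 rho_le.
rewrite (measure_cylinder_partition _ P s _ (measurable_ball_hull _ _ _ (s + K + N))).
rewrite (measure_cylinder_partition _ P s _ (measurable_ball_hull _ _ _ s)).
rewrite ge0_mule_fsumr; last by move=> w; exact: measure_ge0.
apply: lee_fsum; first exact: finite_finset.
by move=> w _; rewrite cylinder_ffun_pad; apply: ball_hull_cylinder_contract.
Qed.

Lemma ball_hull_contract_iter s m x y rho : 0 <= x <= 1 ->
  rho <= gamma ^+ (s + m * (K + N) + K) * d / 8 ->
  (P (ball_hull x y rho (s + m * (K + N))) <=
   (contraction ^+ m)%:E * P (ball_hull x y rho s))%E.
Proof.
move=> x01.
have rho_le_mono n1 n2 : (n1 <= n2)%N ->
    rho <= gamma ^+ n2 * d / 8 -> rho <= gamma ^+ n1 * d / 8.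
  move=> n12 /le_trans; apply; rewrite ler_wpM2r ?invr_ge0 // ler_wpM2r //.
  by rewrite ler_wiXn2l //; case/andP: gamma01 => _ /ltW.
elim: m => [|m IHm] rho_le; first by rewrite mul0n addn0 expr0 mul1e.
have -> : (s + m.+1 * (K + N) = s + m * (K + N) + K + N)%N.
  by rewrite mulSn [(K + N + _)%N]addnC !addnA.
have rho_le_m : rho <= gamma ^+ (s + m * (K + N) + K) * d / 8.
  by apply: rho_le_mono rho_le; rewrite leq_add2r leq_add2l leq_mul2r leqnSn orbT.
apply: le_trans (ball_hull_contract _ _ _ _ x01 rho_le_m) _.
by rewrite exprS EFinM -muleA lee_wpmul2l ?lee_fin ?contraction_ge0 // IHm.
Qed.

Lemma mx_ball_contract x y rho r n m : 0 <= x <= 1 ->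
  rho <= gamma ^+ (n + m * (K + N) + K) * d / 8 -> rho + 2 * C * gamma ^+ n <= r ->
  (mx R b gamma phi P x (ball y rho) <=
   (contraction ^+ m)%:E * mx R b gamma phi P x (ball y r))%E.
Proof.
move=> x01 rho_le rho_r; rewrite /mx.
have mhull n' := mem_set (measurable_ball_hull x y rho n').
have mpre r' := mem_set (measurable_preimage_ball x y r' x01).
apply: le_trans (le_measure _ (mpre _) (mhull _) (preimage_ball_sub_hull _ _ _ _)) _.
apply: le_trans (ball_hull_contract_iter _ _ _ _ _ x01 rho_le) _.
rewrite lee_wpmul2l ?lee_fin ?exprn_ge0 ?contraction_ge0 //.
apply: le_measure (mhull _) (mpre _) _.
by apply: subset_trans (ball_hull_sub_preimage _ _ _ _ x01) _ => j'; apply: le_ball.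
Qed.

Lemma separation_le_tail_const : d <= 4 * C.
Proof.
have zero_in01 : 0 <= (0 : R) <= 1 by rewrite lexx ler01.
have [w _] := separated 0 zero_in01.
have pref0 : eq_prefix 0 i j by [].
have := S_eq_prefix (branch 0 w) i j 0 (branch_in01 b_gt0 _ w zero_in01) pref0.
by rewrite expr0 mulr1; lra.
Qed.

Lemma mx_ball_contract_radius m x y r : 0 <= x <= 1 -> 0 < r < 1 ->
  (mx R b gamma phi P x (ball y (gamma ^+ (m * (K + N) + K).+1 * d / (16 * (2 * C + 1)) * r)) <=
   (contraction ^+ m)%:E * mx R b gamma phi P x (ball y r))%E.
Proof.
move=> x01 /andP[r_gt0 r_lt1].
set T := (m * (K + N))%N; set C2 := 2 * C + 1; set delta := gamma ^+ _ * d / _.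
have C_ge0 := S_tail_const_ge0 gamma01 phi_lip.
have C2_gt0 : 0 < C2 by rewrite /C2; lra.
have gamma_gt0 : 0 < gamma by case/andP: gamma01.
have delta_le : delta <= 1 / 2.
  apply: (@le_trans _ _ (d / (16 * C2))).
    rewrite /delta -mulrA ler_piMl ?divr_ge0 ?mulr_ge0 ?(ltW C2_gt0) //.
    by rewrite exprn_ile1 // ltW //; case/andP: gamma01.
  rewrite ler_pdivrMr ?mulr_gt0 //; have := separation_le_tail_const.
  rewrite /C2; lra.
have [n /andP[lo hi]] : exists n, gamma * (r / (2 * C2)) < gamma ^+ n <= r / (2 * C2).
  apply: exists_expr_bracket => //; rewrite divr_gt0 ?mulr_gt0 //=.
  by rewrite ler_pdivrMr ?mulr_gt0 // mul1r; rewrite /C2; lra.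
apply: (mx_ball_contract x y (delta * r) r n m x01).
- have -> : delta * r = gamma ^+ (T + K) * d / 8 * (gamma * (r / (2 * C2))).
    by rewrite /delta exprS; field; rewrite gt_eqF.
  have -> : (n + m * (K + N) + K = T + K + n)%N by rewrite [RHS]addnC addnA.
  rewrite [gamma ^+ (T + K + n)]exprD (_ : gamma ^+ (T + K) * gamma ^+ n * d / 8 =
                     gamma ^+ (T + K) * d / 8 * gamma ^+ n); last by ring.
  by rewrite ler_wpM2l ?ltW // !mulr_gt0 ?exprn_gt0.
- have := ler_wpM2r (ltW r_gt0) delta_le.
  have := ler_wpM2l (ltW C2_gt0) hi.
  rewrite (_ : C2 * (r / (2 * C2)) = r / 2); last by field; rewrite gt_eqF.
  have := exprn_ge0 n (ltW gamma_gt0).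
  rewrite /C2; nra.
Qed.

Lemma mx_ball_scale eps : 0 < eps -> exists2 delta, 0 < delta &
  forall x y r, 0 <= x <= 1 -> 0 < r < 1 ->
    (mx R b gamma phi P x (ball y (delta * r)) <=
     eps%:E * mx R b gamma phi P x (ball y r))%E.
Proof.
move=> eps_gt0.
have contraction01 : 0 <= contraction < 1.
  by rewrite contraction_ge0 ltrBlDr ltrDl invr_gt0 exprn_gt0 ?ltr0n.
have [m cm_le] := exists_mul_expr_le 1 _ _ contraction01 eps_gt0; rewrite mul1r in cm_le.
exists (gamma ^+ (m * (K + N) + K).+1 * d / (16 * (2 * C + 1))).
  have C_ge0 := S_tail_const_ge0 gamma01 phi_lip.
  by rewrite divr_gt0 ?mulr_gt0 ?exprn_gt0 //; [case/andP: gamma01 | lra].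
move=> x y r x01 r01; apply: le_trans (mx_ball_contract_radius m x y r x01 r01) _.
by rewrite lee_wpmul2r ?lee_fin // measure_ge0.
Qed.

End contraction.
End ball_hulls.

Theorem proposition5p4 (R : realType) (b : nat) (gamma : R) (phi : R -> R)
    (P : probability (SigM b) R) :
  (2 <= b)%N -> 0 < gamma < 1 ->
  Zperiodic R phi -> is_lipschitz R phi -> condH R b gamma phi ->
  is_uniform_product R b P ->
  forall eps : R, 0 < eps ->
  exists delta : R, 0 < delta /\
    forall (x y r : R), 0 <= x <= 1 -> 0 < r < 1 ->
      (mx R b gamma phi P x (ball y (delta * r))
         <= eps%:E * mx R b gamma phi P x (ball y r))%E.
Proof.
move=> b_ge2 gamma01 _ [L phi_lip] H P_unif eps eps_gt0.
have b_gt0 : (0 < b)%N := ltnW b_ge2.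
have gamma01w : 0 <= gamma < 1 by case/andP: gamma01 => /ltW -> ->.
have [i [j [x0 x0_01 d_gt0]]] := exists_separated_pair b_ge2 H.
set d := `|_ - _| in d_gt0.
have [K small] : exists K, L / (1 - gamma) * ((b%:R : R) ^+ K)^-1 <= d / 4.
  under eq_exists do rewrite -exprVn.
  by apply: exists_mul_expr_le; rewrite ?divr_gt0 ?invr_ge0 ?ler0n ?invf_lt1 ?ltr1n ?ltr0n.
have sep := separated_near_point b_gt0 gamma01 phi_lip _ _ _ _ x0_01 small.
have [N tail] : exists N, S_tail_const gamma phi L * gamma ^+ N <= d / 16.
  by apply: exists_mul_expr_le; rewrite ?divr_gt0.
have [delta delta_gt0 mx_le] :=
  mx_ball_scale P b_gt0 gamma01 phi_lip P_unif i j d K N d_gt0 sep tail eps eps_gt0.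
by exists delta.
Qed.
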